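(* Let $\Omega\subset\mathbb{R}^d$ be compact, $\mu$ a probability measure on $\Omega$, $X_N$ an $N$-dimensional subspace of real-valued continuous functions on $\Omega$ (also $N$-dimensional in $L_2(\Omega,\mu)$), and $M$ a nonnegative integer. Then for every real continuous function $\mathcal K$ on $\Omega\times\Omega$, $$\sigma_M^c(\mathcal K)_{(\infty,1)}=\sigma_M^\perp(\mathcal K)_{(\infty,1)}.$$
   Context: $\|\cdot\|_1$ is the norm of $L_1(\Omega,\mu)$. Let $\mathcal{B}_M(X_N^\perp)$ be the set of all functions $\mathcal{W}(\mathbf x,\mathbf y)=\sum_{i=1}^M w_i(\mathbf x)v_i(\mathbf y)$ with $w_i\in\mathcal C(\Omega)$ and $v_i\in L_1(\Omega,\mu)$ such that for every $f\in X_N$ and every $\mathbf x\in\Omega$, $\int_\Omega\mathcal W(\mathbf x,\mathbf y)f(\mathbf y)\,d\mu(\mathbf y)=0$. Define $$\sigma_M^c(\mathcal K)_{(\infty,1)}:=\inf_{\mathcal W\in\mathcal B_M(X_N^\perp)}\sup_{\mathbf x\in\Omega}\|\mathcal K(\mathbf x,\cdot)-\mathcal W(\mathbf x,\cdot)\|_1,$$ $$\sigma_M^\perp(\mathcal K)_{(\infty,1)}:=\inf\ \sup_{\mathbf x\in\Omega}\Big\|\mathcal K(\mathbf x,\cdot)-\sum_{i=1}^M w_i(\mathbf x)v_i(\cdot)\Big\|_1,$$ where the last infimum is over all $w_1,\dots,w_M\in\mathcal C(\Omega)$ and all $v_1,\dots,v_M\in L_1(\Omega,\mu)\cap X_N^\perp$,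 i.e. $\int_\Omega v_if\,d\mu=0$ for all $f\in X_N$. *)

From HB Require Import structures.
From mathcomp Require Import all_boot all_order all_algebra.
From mathcomp Require Import all_classical all_reals all_analysis.
Set Implicit Arguments. Unset Strict Implicit. Unset Printing Implicit Defensive.
Import Order.TTheory GRing.Theory Num.Theory.
Import numFieldNormedType.Exports.
Local Open Scope classical_set_scope.
Local Open Scope ring_scope.

Definition Rd (R : realType) (d : nat) := g_sigma_algebraType (@open 'rV[R]_d).
HB.instance Definition _ (R : realType) (d : nat) :=
  NormedModule.copy (Rd R d) 'rV[R]_d.

Section defs.
Context {R : realType} {d : nat}.
Local Notation V := (Rd R d).

(* X_N = span of the basis phi_1..phi_N *)
Definition span_fun (N : nat) (phi : 'I_N -> V -> R) : set (V -> R) :=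
  [set f | exists c : 'I_N -> R, f = fun y => \sum_(j < N) c j * phi j y].

Definition orth_XN (mu : {measure set V -> \bar R}) (Omega : set V)
  (N : nat) (phi : 'I_N -> V -> R) (v : V -> R) : Prop :=
  forall f, span_fun phi f -> (\int[mu]_(y in Omega) (v y * f y)%:E = 0)%E.

Definition sup_L1_err (mu : {measure set V -> \bar R}) (Omega : set V)
  (K : V -> V -> R) (M : nat) (w v : 'I_M -> V -> R) : \bar R :=
  ereal_sup [set (\int[mu]_(y in Omega)
                    (`| K x y - \sum_(i < M) w i x * v i y |)%:E)%E
            | x in Omega].

(* sigma_M^c(K)_(oo,1): infimum over W = sum_i w_i (x) v_i in B_M(X_N^perp),
   i.e. w_i in C(Omega), v_i in L_1(Omega,mu), and
   int_Omega W(x,y) f(y) dmu(y) = 0 for all f in X_N and all x in Omega. *)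
Definition sigma_c (mu : {measure set V -> \bar R}) (Omega : set V)
  (N : nat) (phi : 'I_N -> V -> R) (K : V -> V -> R) (M : nat) : \bar R :=
  ereal_inf [set e | exists (w v : 'I_M -> V -> R),
    [/\ forall i, {within Omega, continuous (w i)},
        forall i, mu.-integrable Omega (EFin \o v i),
        forall x, Omega x ->
          orth_XN mu Omega phi (fun y => \sum_(i < M) w i x * v i y)
      & e = sup_L1_err mu Omega K w v]].

Definition sigma_perp (mu : {measure set V -> \bar R}) (Omega : set V)
  (N : nat) (phi : 'I_N -> V -> R) (K : V -> V -> R) (M : nat) : \bar R :=
  ereal_inf [set e | exists (w v : 'I_M -> V -> R),
    [/\ forall i, {within Omega, continuous (w i)},
        forall i, mu.-integrable Omega (EFin \o v i),
        forall i, orth_XN mu Omega phi (v i)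
      & e = sup_L1_err mu Omega K w v]].

End defs.

From HB Require Import structures.
From mathcomp Require Import all_boot all_order all_algebra.
From mathcomp Require Import all_classical all_reals all_analysis.
Import Order.TTheory GRing.Theory Num.Theory.
Import numFieldNormedType.Exports.
Local Open Scope classical_set_scope.
Local Open Scope ring_scope.

(* The two infima range over the same set of values.  If every v_i is
   orthogonal to X_N then so is every W(x, .) = sum_i w_i(x) v_i.  Conversely,
   W(x, .) is orthogonal to X_N exactly when the row vector w(x) lies in the
   left kernel of the moment matrix A_ij = int_Omega v_i phi_j dmu.  The matrix
   P = I - A A^+ annihilates A and fixes that left kernel, so replacing v by
   P v leaves W unchanged on Omega x Omega and makes each new v_i orthogonal to
   X_N. *)

Section KernelProjection.
Context {F : fieldType} {m n : nat} (A : 'M[F]_(m, n)).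

Definition kerproj_mx : 'M[F]_m := 1%:M - A *m pinvmx A.

Lemma kerproj_mxA : kerproj_mx *m A = 0.
Proof. by rewrite mulmxBl mul1mx mulmxKpV ?submx_refl // subrr. Qed.

Lemma kerproj_mx_id (u : 'rV[F]_m) : u *m A = 0 -> u *m kerproj_mx = u.
Proof. by move=> uA; rewrite mulmxBr mulmx1 mulmxA uA mul0mx subr0. Qed.

End KernelProjection.

Lemma sum_mul_lin_comb (F : comPzRingType) (m : nat) (a b : 'I_m -> F)
    (B : 'M[F]_m) :
  \sum_k a k * \sum_i B k i * b i = \sum_i ((\row_k a k) *m B) 0 i * b i.
Proof.
under eq_bigr do rewrite mulr_sumr; rewrite exchange_big /=.
apply: eq_bigr => i _; rewrite !mxE mulr_suml.
by apply: eq_bigr => k _; rewrite !mxE mulrA.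
Qed.

Lemma within_continuous_bounded {T : topologicalType} {R : realType}
    {Omega : set T} (f : T -> R) : compact Omega ->
  {within Omega, continuous f} -> [bounded f x | x in Omega].
Proof.
move=> cOmega cf.
have [M [Mr HM]] := compact_bounded (continuous_compact cf cOmega).
by exists M; split => // r Mr0 x Ox; apply: HM => //; exists x.
Qed.

Section LinearCombination.
Context {dT : measure_display} {T : measurableType dT} {R : realType}.
Context {mu : {measure set T -> \bar R}} {D : set T}.
Hypothesis mD : measurable D.
Context {M : nat} (g : 'I_M -> T -> R) (a : 'I_M -> R).
Hypothesis ig : forall i, mu.-integrable D (EFin \o g i).

Let EFin_lin_comb :
  EFin \o (fun y => \sum_i a i * g i y) =
  (fun y => \sum_(i <- index_enum 'I_M) (a i)%:E * (g i y)%:E)%E.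
Proof. by apply/funext => y; rewrite /= -sumEFin. Qed.

Let integrable_scale i :
  mu.-integrable D (fun y => (a i)%:E * (g i y)%:E)%E.
Proof. by apply: integrableZl; [exact: mD | exact: ig]. Qed.

Lemma integrable_lin_comb :
  mu.-integrable D (EFin \o (fun y => \sum_i a i * g i y)).
Proof.
by rewrite EFin_lin_comb; apply: (integrable_sum mD) => i _;
  exact: integrable_scale.
Qed.

Lemma integral_lin_comb :
  (\int[mu]_(y in D) (\sum_i a i * g i y)%:E =
   \sum_i (a i)%:E * \int[mu]_(y in D) (g i y)%:E)%E.
Proof.
rewrite [X in integral _ _ X]EFin_lin_comb (integral_sum mD integrable_scale).
by apply: eq_bigr => i _; rewrite (integralZl mD (ig i)).
Qed.

End LinearCombination.

Section CompactSubsetRd.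
Context {R : realType} {d : nat} {Omega : set (Rd R d)}.
Hypothesis cOmega : compact Omega.

Lemma measurable_compact_Rd : measurable Omega.
Proof.
have clO : closed Omega by apply: compact_closed => //; exact: norm_hausdorff.
rewrite -(setCK Omega); apply: measurableC; apply: sub_sigma_algebra.
exact: closed_openC.
Qed.

Lemma within_continuous_measurable_fun (f : Rd R d -> R) :
  {within Omega, continuous f} -> measurable_fun Omega f.
Proof.
move=> /continuousP cf.
apply: (measurability _ (measurable_realfun.RGenOpens.measurableE R)).
move=> _ [_ [a [b ->] <-]].
have /open_subspaceP [U oU UO] :=
  cf _ (@interval_open R (BRight a) (BLeft b) isT isT).
rewrite setIC -UO; apply: measurableI; last exact: measurable_compact_Rd.
exact: sub_sigma_algebra.
Qed.

Context {mu : {measure set Rd R d -> \bar R}} {N : nat}.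
Context {phi : 'I_N -> Rd R d -> R}.
Hypothesis cphi : forall j, {within Omega, continuous (phi j)}.

Local Notation mOmega := measurable_compact_Rd.

Lemma integrable_mul_basis (v : Rd R d -> R) j :
  mu.-integrable Omega (EFin \o v) ->
  mu.-integrable Omega (EFin \o (fun y => v y * phi j y)).
Proof.
move=> iv; have cj := cphi j.
have := integrableMl mOmega iv (within_continuous_measurable_fun _ cj)
  (within_continuous_bounded _ cOmega cj).
by apply: eq_integrable => //; exact: mOmega.
Qed.

Lemma orth_XNP (v : Rd R d -> R) : mu.-integrable Omega (EFin \o v) ->
  orth_XN mu Omega phi v <->
  forall j, (\int[mu]_(y in Omega) (v y * phi j y)%:E = 0)%E.
Proof.
move=> iv; split => [orth j | orth_basis f [c ->]].
  apply: orth; exists (fun k => (k == j)%:R); apply/funext => y.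
  rewrite (bigD1 j) //= eqxx mul1r big1 ?addr0 // => k /negbTE ->.
  by rewrite mul0r.
have -> : (fun y => (v y * \sum_j c j * phi j y)%:E) =
          (fun y => (\sum_j c j * (v y * phi j y))%:E).
  by apply/funext => y; rewrite mulr_sumr; under eq_bigr do rewrite mulrCA.
rewrite (integral_lin_comb mOmega) => [|j]; last exact: integrable_mul_basis.
by rewrite big1 // => j _; rewrite orth_basis mule0.
Qed.

Section Moments.
Context {M : nat} (v : 'I_M -> Rd R d -> R).
Hypothesis iv : forall i, mu.-integrable Omega (EFin \o v i).

Definition moment_mx : 'M[R]_(M, N) :=
  \matrix_(i, j) fine (\int[mu]_(y in Omega) (v i y * phi j y)%:E)%E.

Lemma moment_mxE i j :
  ((moment_mx i j)%:E = \int[mu]_(y in Omega) (v i y * phi j y)%:E)%E.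
Proof.
rewrite mxE fineK // integrable_fin_num //; first exact: mOmega.
exact: integrable_mul_basis.
Qed.

Lemma orth_XN_lin_combP (a : 'I_M -> R) :
  orth_XN mu Omega phi (fun y => \sum_i a i * v i y) <->
  (\row_i a i) *m moment_mx = 0.
Proof.
rewrite orth_XNP; last exact (integrable_lin_comb mOmega v a iv).
have moment_comb j :
    (\int[mu]_(y in Omega) ((\sum_i a i * v i y) * phi j y)%:E =
     (((\row_i a i) *m moment_mx) 0 j)%:E)%E.
  under eq_integral do rewrite mulr_suml; under eq_integral do
    under eq_bigr do rewrite -mulrA.
  rewrite (integral_lin_comb mOmega) => [|i]; last exact: integrable_mul_basis.
  rewrite !mxE -sumEFin; apply: eq_bigr => i _.
  by rewrite EFinM moment_mxE mxE.
split => [orth | /rowP aA j]; last by rewrite moment_comb aA mxE.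
by apply/rowP => j; apply: EFin_inj; rewrite -moment_comb orth mxE.
Qed.

Lemma orth_XN_moment_mx0 :
  (forall i, orth_XN mu Omega phi (v i)) -> moment_mx = 0.
Proof.
move=> orth; apply/matrixP => i j; apply: EFin_inj.
by rewrite moment_mxE mxE (proj1 (orth_XNP _ (iv i)) (orth i) j).
Qed.

End Moments.

Lemma orth_XN_reduction {M : nat} {w v : 'I_M -> Rd R d -> R} :
  (forall i, mu.-integrable Omega (EFin \o v i)) ->
  (forall x, Omega x ->
     orth_XN mu Omega phi (fun y => \sum_i w i x * v i y)) ->
  exists v' : 'I_M -> Rd R d -> R,
    [/\ forall i, mu.-integrable Omega (EFin \o v' i),
        forall i, orth_XN mu Omega phi (v' i)
      & forall x y, Omega x ->
          \sum_i w i x * v' i y = \sum_i w i x * v i y].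
Proof.
move=> iv orth_W; pose B := kerproj_mx (moment_mx v).
exists (fun k y => \sum_i B k i * v i y); split.
- by move=> k; exact (integrable_lin_comb mOmega v (B k) iv).
- move=> k; apply/orth_XN_lin_combP => //.
  have -> : \row_i B k i = row k B by apply/rowP => i; rewrite !mxE.
  by rewrite -row_mul kerproj_mxA row0.
- move=> x y Ox; rewrite sum_mul_lin_comb kerproj_mx_id //.
    by apply: eq_bigr => i _; rewrite mxE.
  exact/orth_XN_lin_combP/orth_W.
Qed.

End CompactSubsetRd.

Lemma eq_sup_L1_err (R : realType) (d : nat)
    (mu : {measure set Rd R d -> \bar R}) (Omega : set (Rd R d))
    (K : Rd R d -> Rd R d -> R) (M : nat) (w v w' v' : 'I_M -> Rd R d -> R) :
  (forall x y, Omega x ->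
     \sum_i w i x * v i y = \sum_i w' i x * v' i y) ->
  sup_L1_err mu Omega K w v = sup_L1_err mu Omega K w' v'.
Proof.
move=> eqW; congr ereal_sup; apply/seteqP.
by split => _ [x Ox <-]; exists x => //; apply: eq_integral => y _; rewrite eqW.
Qed.

Theorem proposition3p1 (R : realType) (d : nat) (Omega : set (Rd R d))
  (mu : probability (Rd R d) R) (N : nat) (phi : 'I_N -> Rd R d -> R)
  (M : nat) (K : Rd R d -> Rd R d -> R) :
  compact Omega ->
  mu Omega = 1%E ->
  (forall j, {within Omega, continuous (phi j)}) ->
  (forall c : 'I_N -> R,
     {ae mu, forall y, Omega y -> \sum_(j < N) c j * phi j y = 0} ->
     forall j, c j = 0) ->
  {within Omega `*` Omega, continuous (fun p => K p.1 p.2)} ->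
  sigma_c mu Omega phi K M = sigma_perp mu Omega phi K M.
Proof.
move=> cOmega _ cphi _ _; rewrite /sigma_c /sigma_perp; congr ereal_inf.
apply/seteqP; split => _ [w [v [cw iv orth ->]]].
- have [v' [iv' orth' eqW]] := orth_XN_reduction cOmega cphi iv orth.
  exists w, v'; split => //.
  by apply: eq_sup_L1_err => x y Ox; rewrite eqW.
- exists w, v; split => // x Ox.
  by apply/orth_XN_lin_combP => //; rewrite orth_XN_moment_mx0 // mulmx0.
Qed.
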